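(* Let $N\ge1$ and $0<k\le N$, and let $\mathfrak D(N,k)$ be the set of skew-Hermitian $N\times N$ complex matrices $A$ such that $A_{ij}=0$ unless $k$ divides $i-j$. Then $\mathfrak D(N,k)$ is a real Lie subalgebra of $\mathfrak u(N)$ and, with $d=\lfloor N/k\rfloor$ and $r=N-kd$, \[\mathfrak D(N,k)\cong\mathfrak u(d)^{k-r}\oplus\mathfrak u(d+1)^{r}\cong\mathfrak{su}(d)^{k-r}\oplus\mathfrak{su}(d+1)^{r}\oplus\mathfrak u(1)^k\] as Lie algebras. In particular $\dim\mathfrak D(N,k)=kd^2+2rd+r=d(N+r)+r$.
   Context: $\mathfrak u(n)$ denotes the Lie algebra of skew-Hermitian $n\times n$ complex matrices and $\mathfrak{su}(n)$ its traceless subalgebra, with the matrix commutator as bracket; $\lfloor\cdot\rfloor$ is the integer part. *)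

(* Complex numbers: an arbitrary numClosedFieldType C
   (e.g. complex R for R : rcfType / realType); real scalars = Num.real. *)
From HB Require Import structures.
From mathcomp Require Import all_boot all_order all_algebra.
Set Implicit Arguments. Unset Strict Implicit. Unset Printing Implicit Defensive.
Import Order.TTheory GRing.Theory Num.Theory.
Local Open Scope ring_scope.

Section Defs.
Variable C : numClosedFieldType.

Definition adjmx m n (A : 'M[C]_(m, n)) : 'M[C]_(n, m) := map_mx (fun x => x^*) A^T.

Definition mxcomm n (A B : 'M[C]_n) : 'M[C]_n := A *m B - B *m A.

Definition skew_herm n (A : 'M[C]_n) : bool := adjmx A == - A.
Definition skew_herm0 n (A : 'M[C]_n) : bool := skew_herm A && (\tr A == 0).

Definition Dset N k (A : 'M[C]_N) : bool :=
  skew_herm A &&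
  [forall i : 'I_N, forall j : 'I_N, (i %% k != j %% k)%N ==> (A i j == 0)].

Definition real_lie_subalg_u n (P : pred 'M[C]_n) : Prop :=
  {subset P <= @skew_herm n} /\
  0 \in P /\
  (forall A B, A \in P -> B \in P -> A + B \in P) /\
  (forall (a : C) A, a \is Num.real -> A \in P -> a *: A \in P) /\
  (forall A B, A \in P -> B \in P -> mxcomm A B \in P).

(* isomorphism of real Lie algebras, each given as a subset of an
   lmodType C (closed under real combinations and bracket) *)
Definition real_lie_iso (V W : lmodType C) (bV : V -> V -> V) (bW : W -> W -> W)
  (P : pred V) (Q : pred W) (f : V -> W) : Prop :=
  (forall x, x \in P -> f x \in Q) /\
  {in P &, injective f} /\
  (forall y, y \in Q -> exists2 x, x \in P & f x = y) /\
  (forall (a b : C) x y, a \is Num.real -> b \is Num.real -> x \in P -> y \in P ->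
     f (a *: x + b *: y) = a *: f x + b *: f y) /\
  (forall x y, x \in P -> y \in P -> f (bV x y) = bW (f x) (f y)).

Definition real_lie_isomorphic (V W : lmodType C) (bV : V -> V -> V)
  (bW : W -> W -> W) (P : pred V) (Q : pred W) : Prop :=
  exists f : V -> W, real_lie_iso bV bW P Q f.

(* direct sums u(d)^a (+) u(e)^b, resp. su(d)^a (+) su(e)^b (+) u(1)^c *)
Definition UU a b d e := ({ffun 'I_a -> 'M[C]_d} * {ffun 'I_b -> 'M[C]_e})%type.
Definition UU_br a b d e (x y : UU a b d e) : UU a b d e :=
  ([ffun i => mxcomm (x.1 i) (y.1 i)], [ffun i => mxcomm (x.2 i) (y.2 i)]).
Definition UU_pred a b d e : pred (UU a b d e) :=
  fun x => [forall i, skew_herm (x.1 i)] && [forall i, skew_herm (x.2 i)].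

Definition SU a b c d e :=
  ({ffun 'I_a -> 'M[C]_d} * {ffun 'I_b -> 'M[C]_e} * {ffun 'I_c -> 'M[C]_1})%type.
Definition SU_br a b c d e (x y : SU a b c d e) : SU a b c d e :=
  ([ffun i => mxcomm (x.1.1 i) (y.1.1 i)], [ffun i => mxcomm (x.1.2 i) (y.1.2 i)],
   [ffun i => mxcomm (x.2 i) (y.2 i)]).
Definition SU_pred a b c d e : pred (SU a b c d e) :=
  fun x => [&& [forall i, skew_herm0 (x.1.1 i)], [forall i, skew_herm0 (x.1.2 i)]
            & [forall i, skew_herm (x.2 i)]].

Definition real_dim n (P : pred 'M[C]_n) (m : nat) : Prop :=
  exists b : 'I_m -> 'M[C]_n,
    (forall i, b i \in P) /\
    (forall c : 'I_m -> C, (forall i, c i \is Num.real) ->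
        \sum_i c i *: b i = 0 -> forall i, c i = 0) /\
    (forall A, A \in P -> exists2 c : 'I_m -> C, (forall i, c i \is Num.real) &
        A = \sum_i c i *: b i).

End Defs.

(* Ordering the indices by residue class mod k makes every matrix of D(N,k)
   block diagonal: the class {c, c + k, c + 2k, ...} of c < k has d + 1
   elements when c < r and d otherwise, and the principal submatrix on it is
   an arbitrary skew-Hermitian matrix.  Products of such matrices are computed
   blockwise, so extracting the k diagonal blocks is a real-linear bijection
   onto u(d)^(k-r) (+) u(d+1)^r that preserves brackets.  Each u(n) splits as
   su(n) (+) u(1) through A |-> (A - (tr A / n) I, tr A / n), and the u(1)
   parts commute because commutators are traceless.  A real basis of D(N,k)
   has one element per pair (p, q) with p = q mod k, carrying the real part
   (p < q) or the imaginary part (p >= q) of the entry A_pq. *)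

Set Warnings "-notation-overridden,-ambiguous-paths,-notation-incompatible-prefix".
From HB Require Import structures.
From mathcomp Require Import all_boot all_order all_algebra.
From mathcomp Require Import zify ring.
Set Implicit Arguments. Unset Strict Implicit. Unset Printing Implicit Defensive.
Import Order.TTheory GRing.Theory Num.Theory.
Local Open Scope ring_scope.

Section SkewHermitian.
Variable C : numClosedFieldType.
Implicit Types (a b : C).

Lemma skew_hermP n (A : 'M[C]_n) :
  reflect (forall i j, (A j i)^* = - A i j) (skew_herm A).
Proof.
apply: (iffP eqP) => [hA i j|hA].
  by have := congr1 (fun M : 'M_n => M i j) hA; rewrite !mxE.
by apply/matrixP => i j; rewrite !mxE hA.
Qed.

Lemma skew_herm0_mx n : skew_herm (0 : 'M[C]_n).
Proof. by apply/skew_hermP => i j; rewrite !mxE conjC0 oppr0. Qed.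

Lemma skew_hermD n (A B : 'M[C]_n) :
  skew_herm A -> skew_herm B -> skew_herm (A + B).
Proof.
move=> /skew_hermP hA /skew_hermP hB; apply/skew_hermP => i j.
by rewrite !mxE rmorphD /= hA hB opprD.
Qed.

Lemma skew_hermZ n a (A : 'M[C]_n) :
  a \is Num.real -> skew_herm A -> skew_herm (a *: A).
Proof.
move=> ha /skew_hermP hA; apply/skew_hermP => i j.
by rewrite !mxE rmorphM /= hA conj_Creal // mulrN.
Qed.

Lemma skew_herm_scalar n a : a^* = - a -> skew_herm (a%:M : 'M[C]_n).
Proof.
move=> ha; apply/skew_hermP => i j; rewrite !mxE eq_sym.
by case: (i == j); rewrite ?conjC0 ?oppr0 //= ha.
Qed.

Lemma skew_herm_comm n (A B : 'M[C]_n) :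
  skew_herm A -> skew_herm B -> skew_herm (mxcomm A B).
Proof.
move=> /skew_hermP hA /skew_hermP hB; apply/skew_hermP => i j.
rewrite !mxE rmorphB !rmorph_sum /= opprB.
by congr (_ - _); apply: eq_bigr => l _; rewrite rmorphM /= hA hB mulrNN mulrC.
Qed.

Lemma skew_herm_mxsub m n (f : 'I_m -> 'I_n) (A : 'M[C]_n) :
  skew_herm A -> skew_herm (mxsub f f A).
Proof. by move=> /skew_hermP hA; apply/skew_hermP => i j; rewrite !mxE hA. Qed.

Lemma mxtrace_skew_herm n (A : 'M[C]_n) : skew_herm A -> (\tr A)^* = - \tr A.
Proof.
move=> /skew_hermP hA; rewrite /mxtrace rmorph_sum -sumrN.
by apply: eq_bigr => i _; exact: hA.
Qed.

Lemma mxtrace_comm n (A B : 'M[C]_n) : \tr (mxcomm A B) = 0.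
Proof. by rewrite raddfB /= mxtrace_mulC subrr. Qed.

Lemma mxcomm_scalar n (A B : 'M[C]_n) a b :
  mxcomm (A - a%:M) (B - b%:M) = mxcomm A B.
Proof.
rewrite /mxcomm !mulmxBl !mulmxBr !mul_mx_scalar !mul_scalar_mx !scale_scalar_mx.
by rewrite mulrC; apply/matrixP => i j; rewrite !mxE; ring.
Qed.

End SkewHermitian.

Section ResidueSupport.
Variables (C : numClosedFieldType) (N k : nat).
Implicit Types (a : C).

Definition residue_supported (A : 'M[C]_N) :=
  forall i j : 'I_N, (i %% k != j %% k)%N -> A i j = 0.

Lemma DsetP (A : 'M[C]_N) :
  reflect (skew_herm A /\ residue_supported A) (Dset k A).
Proof.
apply: (iffP andP) => -[hA hsupp]; split => //.
  by move=> i j hij; apply/eqP; move/forallP/(_ i)/forallP/(_ j)/implyP: hsupp; apply.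
by apply/forallP => i; apply/forallP => j; apply/implyP => /hsupp ->.
Qed.

Lemma residue_supportedB (A B : 'M[C]_N) :
  residue_supported A -> residue_supported B -> residue_supported (A - B).
Proof. by move=> hA hB i j hij; rewrite !mxE hA ?hB ?subrr. Qed.

Lemma residue_supportedM (A B : 'M[C]_N) :
  residue_supported A -> residue_supported B -> residue_supported (A *m B).
Proof.
move=> hA hB i j hij; rewrite mxE big1 // => l _.
have [eil|nil] := eqVneq (i %% k)%N (l %% k)%N; last by rewrite hA ?mul0r.
by rewrite hB ?mulr0 // -eil.
Qed.

Lemma Dset0 : Dset k (0 : 'M[C]_N).
Proof. by apply/DsetP; split=> [|i j _]; rewrite ?skew_herm0_mx ?mxE. Qed.

Lemma DsetD (A B : 'M[C]_N) : Dset k A -> Dset k B -> Dset k (A + B).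
Proof.
move=> /DsetP[sA zA] /DsetP[sB zB]; apply/DsetP; split; first exact: skew_hermD.
by move=> i j hij; rewrite mxE zA ?zB ?addr0.
Qed.

Lemma DsetZ a (A : 'M[C]_N) : a \is Num.real -> Dset k A -> Dset k (a *: A).
Proof.
move=> ha /DsetP[sA zA]; apply/DsetP; split; first exact: skew_hermZ.
by move=> i j hij; rewrite mxE zA ?mulr0.
Qed.

Lemma Dset_sum (I : finType) (F : I -> 'M[C]_N) :
  (forall i, Dset k (F i)) -> Dset k (\sum_i F i).
Proof. by move=> DF; apply: (big_ind (Dset k)); [exact: Dset0 | exact: DsetD |]. Qed.

Lemma Dset_comm (A B : 'M[C]_N) : Dset k A -> Dset k B -> Dset k (mxcomm A B).
Proof.
move=> /DsetP[sA zA] /DsetP[sB zB]; apply/DsetP; split; first exact: skew_herm_comm.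
by apply: residue_supportedB; apply: residue_supportedM.
Qed.

Lemma Dset_lie_subalg : real_lie_subalg_u [pred A : 'M[C]_N | Dset k A].
Proof.
split; first by move=> A /DsetP[].
split; first exact: Dset0.
split; first exact: DsetD.
split; first by move=> a A; exact: DsetZ.
exact: Dset_comm.
Qed.

End ResidueSupport.

Section Embedding.
Variables (C : numClosedFieldType) (m n : nat) (f : 'I_m -> 'I_n).
Hypothesis f_inj : injective f.

Definition mxembed (B : 'M[C]_m) : 'M[C]_n :=
  \matrix_(p, q) match [pick s | f s == p], [pick t | f t == q] with
                 | Some s, Some t => B s t
                 | _, _ => 0
                 end.

Lemma pick_eq_image s : [pick s' | f s' == f s] = Some s.
Proof.
case: pickP => [s' /eqP/f_inj -> //|/(_ s)].
by rewrite eqxx.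
Qed.

Lemma mxembedE (B : 'M[C]_m) s t : mxembed B (f s) (f t) = B s t.
Proof. by rewrite mxE !pick_eq_image. Qed.

Lemma mxembed_out (B : 'M[C]_m) p q :
  (p \notin codom f) || (q \notin codom f) -> mxembed B p q = 0.
Proof.
move=> /orP out; rewrite mxE.
case: pickP => [s /eqP fs|//]; case: pickP => [t /eqP ft|//].
by case: out => /codomP[]; [exists s | exists t].
Qed.

Lemma skew_herm_mxembed (B : 'M[C]_m) : skew_herm B -> skew_herm (mxembed B).
Proof.
move=> /skew_hermP hB; apply/skew_hermP => p q; rewrite !mxE.
by case: pickP => [s _|_]; case: pickP => [t _|_]; rewrite ?hB ?conjC0 ?oppr0.
Qed.

End Embedding.

Section ResidueClass.
Variables (N k c n : nat).
Hypothesis c_lt_k : (c < k)%N.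
Hypothesis class_bound : forall u, (c + k * u < N)%N = (u < n)%N.

Lemma class_ord_subproof (u : 'I_n) : (c + k * u < N)%N.
Proof. by rewrite class_bound. Qed.

Definition class_ord (u : 'I_n) : 'I_N := Ordinal (class_ord_subproof u).

Lemma class_ord_mod u : (class_ord u %% k = c)%N.
Proof. by rewrite /= addnC mulnC modnMDl modn_small. Qed.

Lemma class_ord_inj : injective class_ord.
Proof.
have k_gt0 : (0 < k)%N by apply: leq_ltn_trans c_lt_k.
by move=> u v /(congr1 val) /= /addnI /eqP; rewrite eqn_pmul2l // => /eqP /val_inj.
Qed.

Lemma imset_class_ord : class_ord @: setT = [set p : 'I_N | p %% k == c]%N.
Proof.
apply/setP => p; rewrite inE; apply/imsetP/eqP => [[u _ ->]|pk].
  exact: class_ord_mod.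
have pdiv : (p = c + k * (p %/ k) :> nat)%N by rewrite -pk addnC mulnC -divn_eq.
have lt_n : (p %/ k < n)%N by rewrite -class_bound -pdiv.
by exists (Ordinal lt_n); last apply: val_inj.
Qed.

Lemma class_ordP (p : 'I_N) : (p %% k = c)%N -> exists u, p = class_ord u.
Proof.
move=> pk; have /imsetP[u _ ->] : p \in class_ord @: setT.
  by rewrite imset_class_ord inE pk.
by exists u.
Qed.

Lemma card_residue_class : #|[set p : 'I_N | p %% k == c]%N| = n.
Proof. by rewrite -imset_class_ord (card_imset _ class_ord_inj) cardsT card_ord. Qed.

Lemma sum_residue_class (R : nmodType) (F : 'I_N -> R) :
  (forall l : 'I_N, (l %% k != c)%N -> F l = 0) ->
  \sum_(l < N) F l = \sum_(u < n) F (class_ord u).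
Proof.
move=> F0; rewrite (bigID (mem [set p : 'I_N | p %% k == c]%N)) /=.
rewrite [X in _ + X]big1 ?addr0 => [|l]; last by rewrite inE => /F0.
rewrite -imset_class_ord big_imset /=; last by move=> u v _ _; apply: class_ord_inj.
by apply: eq_bigl => u; rewrite in_setT.
Qed.

Variable C : numClosedFieldType.

Lemma mxsub_class_mulmx (A B : 'M[C]_N) : residue_supported k A ->
  mxsub class_ord class_ord (A *m B) =
  mxsub class_ord class_ord A *m mxsub class_ord class_ord B.
Proof.
move=> zA; apply/matrixP => u v; rewrite !mxE.
rewrite (sum_residue_class (F := fun l => A (class_ord u) l * B l (class_ord v))).
  by apply: eq_bigr => w _; rewrite !mxE.
by move=> l hl; rewrite zA ?mul0r // class_ord_mod eq_sym.
Qed.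

Lemma mxembed_classE (B : 'M[C]_n) u v :
  mxembed class_ord B (class_ord u) (class_ord v) = B u v.
Proof. exact/mxembedE/class_ord_inj. Qed.

Lemma mxsub_class_comm (A B : 'M[C]_N) :
  residue_supported k A -> residue_supported k B ->
  mxsub class_ord class_ord (mxcomm A B) =
  mxcomm (mxsub class_ord class_ord A) (mxsub class_ord class_ord B).
Proof.
move=> zA zB; rewrite /mxcomm -!mxsub_class_mulmx //.
by apply/matrixP => u v; rewrite !mxE.
Qed.

Lemma mxembed_class_out (B : 'M[C]_n) (p q : 'I_N) :
  (p %% k != c)%N || (q %% k != c)%N -> mxembed class_ord B p q = 0.
Proof.
have codomE (l : 'I_N) : (l \in codom class_ord) = (l %% k == c)%N.
  move/setP/(_ l): imset_class_ord; rewrite inE => <-.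
  by apply/codomP/imsetP => -[u]; exists u.
by move=> h; apply: mxembed_out; rewrite !codomE.
Qed.

Lemma Dset_mxembed_class (B : 'M[C]_n) :
  skew_herm B -> Dset k (mxembed class_ord B).
Proof.
move=> sB; apply/DsetP; split; first exact: skew_herm_mxembed.
move=> p q pq; apply: mxembed_class_out; apply: contraNT pq.
by rewrite negb_or !negbK => /andP[/eqP -> /eqP ->].
Qed.

End ResidueClass.

Section RealBasis.
Variables (C : numClosedFieldType) (N k : nat).

Definition residue_pairs : {set 'I_N * 'I_N} :=
  [set x : 'I_N * 'I_N | (x.1 %% k == x.2 %% k)%N].

(* For x = (p, q): E_pq - E_qp if p < q, i (E_pq + E_qp) if q < p, and i E_pp if p = q. *)
Definition Dbasis (x : 'I_N * 'I_N) : 'M[C]_N :=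
  \matrix_(a, b)
    ((if (a, b) == x then (if (x.1 < x.2)%N then 1 else 'i) else 0) +
     (if ((b, a) == x) && (x.1 != x.2) then (if (x.1 < x.2)%N then -1 else 'i) else 0)).

Definition Dcoord (A : 'M[C]_N) (x : 'I_N * 'I_N) : C :=
  if (x.1 < x.2)%N then 'Re (A x.1 x.2)
  else if (x.2 < x.1)%N then 'Im (A x.2 x.1) else 'Im (A x.1 x.1).

Lemma mem_residue_pairsC (a b : 'I_N) :
  ((b, a) \in residue_pairs) = ((a, b) \in residue_pairs).
Proof. by rewrite !inE eq_sym. Qed.

Lemma Dset_Dbasis (x : 'I_N * 'I_N) : x \in residue_pairs -> Dset k (Dbasis x).
Proof.
case: x => p q; rewrite inE /= => pq; apply/DsetP; split; last first.
  move=> a b ab; rewrite mxE !xpair_eqE.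
  have [nab nba] : ~~ ((a == p) && (b == q)) /\ ~~ ((b == p) && (a == q)).
    by split; apply: contraNN ab => /andP[/eqP-> /eqP->]; rewrite // eq_sym.
  by rewrite (negbTE nab) (negbTE nba) addr0.
apply/skew_hermP => a b; rewrite !mxE !xpair_eqE /=.
have [<-|npq] := eqVneq p q.
  rewrite !andbF !addr0 ltnn [(b == p) && _]andbC.
  by case: ifP => _; rewrite ?conjCi ?conjC0 ?oppr0.
rewrite !andbT.
case: (boolP ((a == p) && (b == q))) => [/andP[/eqP-> /eqP->]|nab].
  rewrite (negbTE npq) andbF add0r addr0.
  by case: ltngtP => _; rewrite ?rmorphN1 ?conjCi.
rewrite add0r addr0; case: ifP => _; last by rewrite conjC0 oppr0.
by case: ltngtP => _; rewrite ?rmorph1 ?opprK ?conjCi.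
Qed.

Lemma sumr_if_eq (T : finType) (S : {pred T}) (t : T) (F : T -> C) :
  \sum_(x in S) (if t == x then F x else 0) = if t \in S then F t else 0.
Proof.
rewrite -big_mkcondr; case: ifP => tS.
  by apply: big_pred1 => x /=; rewrite eq_sym; case: eqP => [->|_]; rewrite ?andbT ?andbF.
by apply: big_pred0 => x; rewrite eq_sym; case: eqP => [->|_]; rewrite ?tS ?andbF.
Qed.

Lemma sum_DbasisE (c : 'I_N * 'I_N -> C) (a b : 'I_N) :
  (\sum_(x in residue_pairs) c x *: Dbasis x) a b =
  if (a %% k == b %% k)%N then
    if (a < b)%N then c (a, b) + 'i * c (b, a)
    else if (b < a)%N then - c (b, a) + 'i * c (a, b)
    else 'i * c (a, a)
  else 0.
Proof.
rewrite summxE (eq_bigr (fun x =>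
    (if (a, b) == x then c x * (if (x.1 < x.2)%N then 1 else 'i) else 0) +
    (if (b, a) == x then
       (if x.1 != x.2 then c x * (if (x.1 < x.2)%N then -1 else 'i) else 0)
     else 0))); last first.
  move=> x _; rewrite !mxE mulrDr; congr (_ + _); first by case: ifP; rewrite ?mulr0.
  by case: ((b, a) == x); case: (x.1 != x.2); rewrite ?mulr0.
rewrite big_split /= !sumr_if_eq !inE /= [(b %% k == _)%N]eq_sym.
case: ifP => _; last by rewrite addr0.
have [ab|ba|/val_inj->] := ltngtP a b; last by rewrite eqxx addr0 mulrC.
  have -> : b != a by apply: contraTneq ab => ->; rewrite ltnn.
  by rewrite mulr1 mulrC.
have -> : b != a by apply: contraTneq ba => ->; rewrite ltnn.
by rewrite mulrC mulrN1 addrC.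
Qed.

Lemma Dcoord_real A x : Dcoord A x \is Num.real.
Proof.
by rewrite /Dcoord; case: ifP => _; [|case: ifP => _]; rewrite ?Creal_Re ?Creal_Im.
Qed.

Lemma Dcoord_sum (c : 'I_N * 'I_N -> C) :
  {in residue_pairs, forall x, c x \is Num.real} ->
  {in residue_pairs, forall x,
    Dcoord (\sum_(y in residue_pairs) c y *: Dbasis y) x = c x}.
Proof.
move=> c_real [p q] pq; have qp : (q, p) \in residue_pairs by rewrite mem_residue_pairsC.
move: (pq); rewrite inE /= => /eqP pqk.
rewrite /Dcoord /= !sum_DbasisE pqk eqxx; case: ltngtP => [_|_|/val_inj pq_eq].
- by rewrite Re_rect ?c_real.
- by rewrite Im_rect ?c_real.
by rewrite -pq_eq in pq *; rewrite ltnn -[_ * _]add0r Im_rect ?real0 ?c_real.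
Qed.

Lemma sum_Dcoord (A : 'M[C]_N) :
  Dset k A -> \sum_(x in residue_pairs) Dcoord A x *: Dbasis x = A.
Proof.
case/DsetP => /skew_hermP sA zA; apply/matrixP => a b; rewrite sum_DbasisE /Dcoord /=.
case: eqP => [ab|/eqP nab]; last by rewrite zA.
case: ltngtP => [ab'|ba|/val_inj->].
- by rewrite [RHS]Crect.
- rewrite -[RHS]opprK -sA [in RHS](Crect (A b a)) rmorphD rmorphM /= conjCi.
  by rewrite !conj_Creal ?Creal_Re ?Creal_Im // opprD mulNr opprK.
have re0 : 'Re (A b b) = 0 by rewrite ReE sA subrr mul0r.
by rewrite ltnn [RHS]Crect re0 add0r.
Qed.

Lemma real_dim_Dset : real_dim [pred A : 'M[C]_N | Dset k A] #|residue_pairs|.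
Proof.
exists (fun i => Dbasis (enum_val i)); split.
  by move=> i; rewrite inE Dset_Dbasis ?enum_valP.
split.
  move=> c c_real sum0 i; have Si := enum_valP i.
  pose c' x := c (enum_rank_in Si x).
  have c'K j : c' (enum_val j) = c j by rewrite /c' enum_valK_in.
  rewrite -c'K -Dcoord_sum ?enum_valP // => [|x _]; last exact: c_real.
  rewrite big_enum_val (eq_bigr (fun j => c j *: Dbasis (enum_val j))) => [|j _].
    by rewrite sum0 /Dcoord !mxE !raddf0 !if_same.
  by rewrite c'K.
move=> A; rewrite inE => /sum_Dcoord <-.
exists (fun i => Dcoord A (enum_val i)) => [i|]; first exact: Dcoord_real.
by rewrite big_enum_val.
Qed.

End RealBasis.

Section BlockDecomposition.
Variables (C : numClosedFieldType) (N k d r : nat).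
Implicit Types (a b : C).
Hypothesis r_lt_k : (r < k)%N.
Hypothesis N_eq : N = (k * d + r)%N.

Definition class_size (c : nat) := if (c < r)%N then d.+1 else d.

Lemma residue_class_size c :
  (c < k)%N -> forall u, (c + k * u < N)%N = (u < class_size c)%N.
Proof.
rewrite /class_size N_eq => c_lt_k u; case: ifP => c_r; apply/idP/idP => h;
  first [nia | by rewrite ltnNge; apply/negP => ?; nia].
Qed.

Lemma low_lt_k (i : 'I_r) : (i < k)%N.
Proof. exact: ltn_trans (ltn_ord i) r_lt_k. Qed.

Lemma high_lt_k (i : 'I_(k - r)) : (r + i < k)%N.
Proof. by rewrite -ltn_subRL. Qed.

Lemma low_class_size (i : 'I_r) u : (i + k * u < N)%N = (u < d.+1)%N.
Proof. by rewrite residue_class_size ?low_lt_k // /class_size ltn_ord. Qed.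

Lemma high_class_size (i : 'I_(k - r)) u : (r + i + k * u < N)%N = (u < d)%N.
Proof.
by rewrite residue_class_size ?high_lt_k // /class_size ifN // -leqNgt leq_addr.
Qed.

Local Notation low i := (class_ord (low_class_size i)).
Local Notation high i := (class_ord (high_class_size i)).
Local Notation UU := (UU C (k - r) r d d.+1).

Definition blocks (A : 'M[C]_N) : UU :=
  ([ffun i => mxsub (high i) (high i) A], [ffun i => mxsub (low i) (low i) A]).

Definition unblocks (x : UU) : 'M[C]_N :=
  \sum_i mxembed (high i) (x.1 i) + \sum_i mxembed (low i) (x.2 i).

Lemma blocks_UU_pred (A : 'M[C]_N) : Dset k A -> UU_pred (blocks A).
Proof.
case/DsetP => sA _; apply/andP; split; apply/forallP => i;
  by rewrite ffunE skew_herm_mxsub.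
Qed.

Lemma unblocks_Dset (x : UU) : UU_pred x -> Dset k (unblocks x).
Proof.
case/andP => /forallP s1 /forallP s2.
apply: DsetD; apply: Dset_sum => i; apply: Dset_mxembed_class => //.
- exact: high_lt_k.
- exact: low_lt_k.
Qed.

Lemma low_mod i u : (low i u %% k)%N = i.
Proof. exact: class_ord_mod (low_lt_k i) _ u. Qed.

Lemma high_mod i u : (high i u %% k)%N = r + i.
Proof. exact: class_ord_mod (high_lt_k i) _ u. Qed.

Lemma blocksK : cancel unblocks blocks.
Proof.
have low_ne_high (i : 'I_r) (j : 'I_(k - r)) : (val i != r + j)%N.
  by rewrite neq_ltn (ltn_addr _ (ltn_ord i)).
case=> x1 x2; congr pair; apply/ffunP => i; apply/matrixP => u v;
  rewrite ffunE mxE mxE !summxE /=.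
- rewrite (bigD1 i) //= mxembed_classE ?high_lt_k //.
  rewrite !big1 ?addr0 // => j.
    move=> _; apply: (mxembed_class_out (low_lt_k j)).
    by rewrite high_mod eq_sym low_ne_high.
  move=> ji; apply: (mxembed_class_out (high_lt_k j)); rewrite high_mod eqn_add2l.
  by apply/orP; left; apply: contraNN ji => /eqP/val_inj->.
rewrite (bigD1 i) //= mxembed_classE ?low_lt_k //.
rewrite !big1 ?add0r ?addr0 // => j.
  move=> ji; apply: (mxembed_class_out (low_lt_k j)); rewrite low_mod.
  by apply/orP; left; apply: contraNN ji => /eqP/val_inj->.
move=> _; apply: (mxembed_class_out (high_lt_k j)).
by rewrite low_mod low_ne_high.
Qed.

Lemma blocks_inj : {in [pred A : 'M[C]_N | Dset k A] &, injective blocks}.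
Proof.
move=> A B /DsetP[_ zA] /DsetP[_ zB] eqAB; apply/matrixP => p q.
have [pq|npq] := eqVneq (p %% k)%N (q %% k)%N; last by rewrite zA ?zB.
have p_lt_k : (p %% k < k)%N by apply: ltn_pmod; apply: leq_ltn_trans r_lt_k.
have [p_lt_r|p_ge_r] := ltnP (p %% k)%N r.
  pose i := Ordinal p_lt_r.
  have [u ->] := class_ordP (low_lt_k i) (low_class_size i) (erefl : (p %% k)%N = i).
  have [v ->] := class_ordP (low_lt_k i) (low_class_size i) (esym pq : (q %% k)%N = i).
  by have := congr1 (fun x : UU => x.2 i u v) eqAB; rewrite /= !ffunE !mxE.
have p_sub : (p %% k - r < k - r)%N by rewrite ltn_sub2r.
pose i := Ordinal p_sub.
have pi : (p %% k = r + i)%N by rewrite /= subnKC.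
have [u ->] := class_ordP (high_lt_k i) (high_class_size i) pi.
have [v ->] := class_ordP (high_lt_k i) (high_class_size i) (etrans (esym pq) pi).
by have := congr1 (fun x : UU => x.1 i u v) eqAB; rewrite /= !ffunE !mxE.
Qed.

Lemma blocks_linear a b (A B : 'M[C]_N) :
  blocks (a *: A + b *: B) = a *: blocks A + b *: blocks B.
Proof. by congr pair; apply/ffunP => i; apply/matrixP => u v; rewrite !ffunE !mxE. Qed.

Lemma blocks_comm (A B : 'M[C]_N) : Dset k A -> Dset k B ->
  blocks (mxcomm A B) = UU_br (blocks A) (blocks B).
Proof.
move=> /DsetP[_ zA] /DsetP[_ zB]; congr pair; apply/ffunP => i;
  by rewrite !ffunE mxsub_class_comm // ?high_lt_k ?low_lt_k.
Qed.

Lemma blocks_real_lie_iso :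
  real_lie_iso (@mxcomm C N) (@UU_br C (k - r) r d d.+1)
    [pred A | Dset k A] (@UU_pred C (k - r) r d d.+1) blocks.
Proof.
split; first exact: blocks_UU_pred.
split; first exact: blocks_inj.
split; first by move=> x ux; exists (unblocks x); [exact: unblocks_Dset | exact: blocksK].
split; first by move=> a b A B *; exact: blocks_linear.
exact: blocks_comm.
Qed.

Lemma card_residue_pairs : #|residue_pairs N k| = (k * d ^ 2 + 2 * r * d + r)%N.
Proof.
have k_gt0 : (0 < k)%N by apply: leq_ltn_trans r_lt_k.
pose res (p : 'I_N) : 'I_k := Ordinal (ltn_pmod p k_gt0).
have class_sq (c : 'I_k) :
    (\sum_(x in residue_pairs N k | res x.1 == c) 1 = class_size c ^ 2)%N.
  rewrite sum1_card -(card_residue_class (ltn_ord c) (residue_class_size (ltn_ord c))).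
  rewrite expnS expn1 -cardsX; apply: eq_card => -[p q].
  rewrite unfold_in /= !inE /= -val_eqE /=.
  by case: (eqVneq (p %% k)%N c) => [->|]; rewrite ?andbT ?andbF // eq_sym.
rewrite -sum1_card (partition_big (fun x => res x.1) xpredT) //=.
rewrite (eq_bigr _ (fun c _ => class_sq c)).
rewrite -(big_mkord xpredT (fun c => class_size c ^ 2)%N).
rewrite (@big_cat_nat _ _ _ r 0 k) ?(ltnW r_lt_k) //=.
rewrite [X in (X + _)%N](eq_big_nat _ _ (F2 := fun _ => d.+1 ^ 2)%N); last first.
  by move=> c /andP[_ c_r]; rewrite /class_size c_r.
rewrite [X in (_ + X)%N](eq_big_nat _ _ (F2 := fun _ => d ^ 2)%N); last first.
  by move=> c /andP[r_c _]; rewrite /class_size ltnNge r_c.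
by rewrite !sum_nat_const_nat subn0; nia.
Qed.

End BlockDecomposition.

Section MeanTrace.
Variables (C : numClosedFieldType) (n : nat).
Implicit Types (a b : C) (A B : 'M[C]_n).

Definition mean_tr A : C := \tr A / n%:R.

Lemma mean_tr_skew_herm A : skew_herm A -> (mean_tr A)^* = - mean_tr A.
Proof. by move=> sA; rewrite fmorph_div /= conjC_nat mxtrace_skew_herm // mulNr. Qed.

Lemma mean_tr_linear a b A B :
  mean_tr (a *: A + b *: B) = a * mean_tr A + b * mean_tr B.
Proof. by rewrite /mean_tr mxtraceD !mxtraceZ mulrDl !mulrA. Qed.

Lemma mean_tr_comm A B : mean_tr (mxcomm A B) = 0.
Proof. by rewrite /mean_tr mxtrace_comm mul0r. Qed.

Hypothesis n_gt0 : (0 < n)%N.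

Lemma mxtrace_sub_mean A : \tr (A - (mean_tr A)%:M) = 0.
Proof.
rewrite raddfB /= mxtrace_scalar /mean_tr -[(_ / _) *+ _]mulr_natr divfK ?subrr //.
by rewrite pnatr_eq0 -lt0n.
Qed.

Lemma mean_trD_scalar A a : \tr A = 0 -> mean_tr (A + a%:M) = a.
Proof.
move=> trA; rewrite /mean_tr mxtraceD trA add0r mxtrace_scalar.
rewrite -[_ *+ _]mulr_natr mulfK //.
by rewrite pnatr_eq0 -lt0n.
Qed.

Lemma skew_herm0_sub_mean A : skew_herm A -> skew_herm0 (A - (mean_tr A)%:M).
Proof.
move=> sA; rewrite /skew_herm0 mxtrace_sub_mean eqxx andbT.
by rewrite -raddfN /= skew_hermD // skew_herm_scalar // rmorphN /= mean_tr_skew_herm.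
Qed.

End MeanTrace.

Section TraceSplitting.
Variables (C : numClosedFieldType) (k d r : nat).
Hypothesis d_gt0 : (0 < d)%N.
Hypothesis r_le_k : (r <= k)%N.
Implicit Types (a b : C).

Local Notation UU := (UU C (k - r) r d d.+1).
Local Notation SU := (SU C (k - r) r k d d.+1).

Definition split_index (j : 'I_k) : 'I_(k - r) + 'I_r :=
  split (cast_ord (esym (subnK r_le_k)) j).

Definition merge_index (s : 'I_(k - r) + 'I_r) : 'I_k :=
  cast_ord (subnK r_le_k) (unsplit s).

Lemma merge_indexK : cancel merge_index split_index.
Proof. by move=> s; rewrite /split_index /merge_index cast_ordK unsplitK. Qed.

Lemma split_indexK : cancel split_index merge_index.
Proof. by move=> j; rewrite /split_index /merge_index splitK cast_ordKV. Qed.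

Definition block_mean (x : UU) (s : 'I_(k - r) + 'I_r) : C :=
  match s with inl i => mean_tr (x.1 i) | inr i => mean_tr (x.2 i) end.

Definition to_su (x : UU) : SU :=
  ([ffun i => x.1 i - (mean_tr (x.1 i))%:M],
   [ffun i => x.2 i - (mean_tr (x.2 i))%:M],
   [ffun j => (block_mean x (split_index j))%:M]).

Definition of_su (y : SU) : UU :=
  ([ffun i => y.1.1 i + (y.2 (merge_index (inl i)) 0 0)%:M],
   [ffun i => y.1.2 i + (y.2 (merge_index (inr i)) 0 0)%:M]).

Lemma to_su_SU_pred x : UU_pred x -> SU_pred (to_su x).
Proof.
case/andP => /forallP s1 /forallP s2; apply/and3P; split; apply/forallP => i;
  rewrite ffunE ?skew_herm0_sub_mean //.
by apply: skew_herm_scalar; case: split_index => j; rewrite mean_tr_skew_herm.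
Qed.

Lemma of_su_UU_pred y : SU_pred y -> UU_pred (of_su y).
Proof.
case/and3P => /forallP s1 /forallP s2 /forallP s3.
have s3' j : (y.2 j 0 0)^* = - y.2 j 0 0 by move/skew_hermP: (s3 j); apply.
apply/andP; split; apply/forallP => i; rewrite ffunE skew_hermD ?skew_herm_scalar //.
  by case/andP: (s1 i).
by case/andP: (s2 i).
Qed.

Lemma to_suK : cancel to_su of_su.
Proof.
case=> x1 x2; congr pair; apply/ffunP => i;
  by rewrite !ffunE merge_indexK mxE eqxx mulr1n subrK.
Qed.

Lemma of_suK y : SU_pred y -> to_su (of_su y) = y.
Proof.
case: y => -[y1 y2] y3 /and3P[/forallP s1 /forallP s2 _].
congr (_, _, _); apply/ffunP => i; rewrite !ffunE.
- by case/andP: (s1 i) => _ /eqP tr0; rewrite mean_trD_scalar // addrK.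
- by case/andP: (s2 i) => _ /eqP tr0; rewrite mean_trD_scalar // addrK.
rewrite -[in RHS](split_indexK i) [RHS]mx11_scalar.
case: split_index => j /=; rewrite ffunE mean_trD_scalar //.
- by case/andP: (s1 j) => _ /eqP.
- by case/andP: (s2 j) => _ /eqP.
Qed.

Lemma to_su_linear a b x y : to_su (a *: x + b *: y) = a *: to_su x + b *: to_su y.
Proof.
congr (_, _, _); apply/ffunP => i; rewrite !ffunE.
- by rewrite mean_tr_linear; apply/matrixP => s t; rewrite !mxE; ring.
- by rewrite mean_tr_linear; apply/matrixP => s t; rewrite !mxE; ring.
have -> : block_mean (a *: x + b *: y) (split_index i) =
          a * block_mean x (split_index i) + b * block_mean y (split_index i).
  by case: split_index => j; rewrite /= !ffunE mean_tr_linear.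
by apply/matrixP => s t; rewrite !mxE; ring.
Qed.

Lemma to_su_comm x y : to_su (UU_br x y) = SU_br (to_su x) (to_su y).
Proof.
congr (_, _, _); apply/ffunP => i; rewrite !ffunE.
- by rewrite mxcomm_scalar mean_tr_comm raddf0 subr0.
- by rewrite mxcomm_scalar mean_tr_comm raddf0 subr0.
have -> : block_mean (UU_br x y) (split_index i) = 0.
  by case: split_index => j; rewrite /= ffunE mean_tr_comm.
by rewrite /mxcomm -!scalar_mxM mulrC subrr raddf0.
Qed.

Lemma to_su_real_lie_iso :
  real_lie_iso (@UU_br C (k - r) r d d.+1) (@SU_br C (k - r) r k d d.+1)
    (@UU_pred C (k - r) r d d.+1) (@SU_pred C (k - r) r k d d.+1) to_su.
Proof.
split; first exact: to_su_SU_pred.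
split; first by move=> x y _ _ /(congr1 of_su); rewrite !to_suK.
split; first by move=> y sy; exists (of_su y); [exact: of_su_UU_pred | exact: of_suK].
split; first by move=> a b x y *; exact: to_su_linear.
by move=> x y _ _; exact: to_su_comm.
Qed.

End TraceSplitting.

Unset Implicit Arguments.

Theorem mainTheorem3 (C : numClosedFieldType) (N k : nat)
  (hN : (1 <= N)%N) (hk0 : (0 < k)%N) (hkN : (k <= N)%N) :
  let d := (N %/ k)%N in
  let r := (N - k * d)%N in
  let P : pred 'M[C]_N := [pred A | Dset k A] in
  real_lie_subalg_u P /\
  real_lie_isomorphic (@mxcomm C N) (@UU_br C (k - r) r d d.+1)
     P (@UU_pred C (k - r) r d d.+1) /\
  real_lie_isomorphic (@UU_br C (k - r) r d d.+1) (@SU_br C (k - r) r k d d.+1)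
     (@UU_pred C (k - r) r d d.+1) (@SU_pred C (k - r) r k d d.+1) /\
  real_dim P (k * d ^ 2 + 2 * r * d + r)%N /\
  (k * d ^ 2 + 2 * r * d + r = d * (N + r) + r)%N.
Proof.
move=> d r P.
have d_gt0 : (0 < d)%N by rewrite divn_gt0.
have r_eq : r = (N %% k)%N.
  by rewrite /r /d [in X in (X - _)%N](divn_eq N k) mulnC addKn.
have r_lt_k : (r < k)%N by rewrite r_eq ltn_mod.
have N_eq : N = (k * d + r)%N by rewrite r_eq /d mulnC -divn_eq.
split; first exact: Dset_lie_subalg.
split; first by eexists; exact: blocks_real_lie_iso.
split; first by eexists; apply: to_su_real_lie_iso; rewrite // ltnW.
split; first by rewrite -(card_residue_pairs r_lt_k N_eq); exact: real_dim_Dset.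
by rewrite [in RHS]N_eq; clear; nia.
Qed.
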